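(* Let $G_1$ and $G_2$ be vertex-disjoint finite simple graphs and let $G=G_1*G_2$ be their join. If $G$ is not a complete multipartite graph, then (a) ${\rm v}(I_c(G))=\min\{{\rm v}(I_c(G_1))+|V(G_2)|,\ {\rm v}(I_c(G_2))+|V(G_1)|\}$, and (b) ${\rm v}(I_c(G))={\rm v}(I_c(G_1))+|V(G_2)|$ if $G_2$ is a discrete graph (has no edges).
   Context: The join $G_1*G_2$ consists of $G_1\cup G_2$ together with all edges joining a vertex of $G_1$ with a vertex of $G_2$. A graph is complete multipartite if it is a join $H_1*\cdots*H_k$, $k\ge2$, of pairwise vertex-disjoint graphs without edges. For a graph $H$ with vertex set $\{t_1,\ldots,t_n\}$, $I_c(H)$ is the ideal of $K[t_1,\ldots,t_n]$ ($K$ a field) generated by $\prod_{t_i\in C}t_i$ over all minimal vertex covers $C$ of $H$ (vertex cover: subset of vertices meeting every edge). For a graded ideal $I$ of a standard graded polynomial ring $R$, ${\rm v}(I)=\min\{d\ge0:\exists f\in R_d,\ \exists\mathfrak p\in{\rm Ass}(I),\ (I\colon f)=\mathfrak p\}$. *)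

From HB Require Import structures.
From mathcomp Require Import all_boot all_order all_algebra.
From mathcomp Require Import mpoly.

Set Implicit Arguments.
Unset Strict Implicit.
Unset Printing Implicit Defensive.

Import GRing.Theory.
Local Open Scope ring_scope.

Definition simple_graph (T : finType) (e : rel T) : Prop :=
  ssrbool.symmetric e /\ ssrbool.irreflexive e.

Definition discrete_graph (T : finType) (e : rel T) : Prop :=
  forall x y, e x y = false.

Definition graph_join (T1 T2 : finType) (e1 : rel T1) (e2 : rel T2)
  : rel (T1 + T2)%type :=
  fun u v => match u, v with
             | inl x, inl y => e1 x y
             | inr x, inr y => e2 x y
             | _, _ => true
             end.

(* Complete multipartite graph: a join H_1 * ... * H_k (k >= 2) of pairwise
   vertex-disjoint edgeless (nonempty) graphs, i.e. a partition of the
   vertices into k >= 2 nonempty classes, with x ~ y iff x, y lie in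
   different classes. *)
Definition complete_multipartite (T : finType) (e : rel T) : Prop :=
  exists (k : nat) (c : T -> 'I_k),
    (2 <= k)%N /\ (forall i : 'I_k, exists x, c x = i) /\
    (forall x y, e x y = (c x != c y)).

Definition vertex_cover (T : finType) (e : rel T) : pred {set T} :=
  fun C => [forall x, forall y, e x y ==> (x \in C) || (y \in C)].

Definition min_vertex_cover (T : finType) (e : rel T) (C : {set T}) : bool :=
  minset (vertex_cover e) C.

Definition polyring (K : fieldType) (T : finType) := {mpoly K[#|T|]}.

Definition tvar (K : fieldType) (T : finType) (v : T) : polyring K T :=
  'X_(enum_rank v).

(* Ideals are represented by their membership predicates. *)
Definition colon_ideal (R : ringType) (I : R -> Prop) (f : R) : R -> Prop :=
  fun g => I (g * f).

Definition is_ideal (R : ringType) (P : R -> Prop) : Prop :=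
  P 0 /\ (forall a b, P a -> P b -> P (a + b)) /\
  (forall r a, P a -> P (r * a)).

Definition prime_ideal (R : ringType) (P : R -> Prop) : Prop :=
  is_ideal P /\ ~ P 1 /\ (forall a b, P (a * b) -> P a \/ P b).

Definition same_ideal (R : ringType) (P Q : R -> Prop) : Prop :=
  forall g, P g <-> Q g.

Definition Ass (R : ringType) (I : R -> Prop) (p : R -> Prop) : Prop :=
  prime_ideal p /\ exists g, same_ideal p (colon_ideal I g).

(* Homogeneous of (standard) degree d, i.e. element of R_d (0 included). *)
Definition homog_of_deg (K : fieldType) (n : nat) (d : nat) (f : {mpoly K[n]}) :=
  f \is ishomog1 d mdeg.

Definition vnum_witness (K : fieldType) (n : nat) (I : {mpoly K[n]} -> Prop)
    (d : nat) : Prop :=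
  exists f : {mpoly K[n]}, homog_of_deg d f /\
    exists p, Ass I p /\ same_ideal (colon_ideal I f) p.

(* is_vnum I v : v(I) = v, where v = None means the defining set is empty
   (v(I) = +infinity, e.g. when I is the unit ideal). *)
Definition is_vnum (K : fieldType) (n : nat) (I : {mpoly K[n]} -> Prop)
    (v : option nat) : Prop :=
  match v with
  | Some d => vnum_witness I d /\ (forall d', vnum_witness I d' -> (d <= d')%N)
  | None => forall d, ~ vnum_witness I d
  end.

Definition cover_monomial (K : fieldType) (T : finType) (C : {set T})
    : polyring K T :=
  \prod_(v in C) tvar K v.

Definition cover_ideal (K : fieldType) (T : finType) (e : rel T)
    : polyring K T -> Prop :=
  fun f => exists c : {set T} -> polyring K T,
    f = \sum_(C : {set T} | min_vertex_cover e C) c C * cover_monomial K C.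

(* Arithmetic on extended naturals (None = +infinity). *)
Definition oaddn (v : option nat) (m : nat) : option nat :=
  omap (fun d => (d + m)%N) v.

Definition ominn (v w : option nat) : option nat :=
  match v, w with
  | Some a, Some b => Some (minn a b)
  | Some a, None => Some a
  | None, Some b => Some b
  | None, None => None
  end.

Arguments tvar K {T} v.
Arguments cover_monomial K {T} C.
Arguments cover_ideal K {T} e _.

From HB Require Import structures.
From mathcomp Require Import all_boot all_order all_algebra.
From mathcomp Require Import mpoly.
From mathcomp Require Import zify.

(* The v-number of I_c(G) is combinatorial: it is the least size of a vertex
   set A such that the vertices outside A span exactly one edge xy.  For such
   an A, (I_c(G) : t_A) = (t_x, t_y) is prime.  Conversely, if (I_c(G) : f) is
   prime, applying primality to a product of variables that covers every edge
   missed by some monomial of f yields two adjacent vertices lying on all such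
   edges, and the support of a monomial of f missing them is such an A.
   In a join, a set leaving exactly one edge either contains a whole side, or
   leaves a single edge between the sides; the latter A is as large as the
   complement of an edge inside G_1 or G_2, and when both G_i are edgeless,
   G is complete bipartite. *)

Set Implicit Arguments.
Unset Strict Implicit.
Unset Printing Implicit Defensive.

Import GRing.Theory.
Local Open Scope ring_scope.

Definition is_omin (S : nat -> Prop) (v : option nat) : Prop :=
  match v with
  | Some d => S d /\ (forall d', S d' -> (d <= d')%N)
  | None => forall d, ~ S d
  end.

Lemma is_omin_transfer (S S' : nat -> Prop) v :
  (forall d, S' d -> S d) -> (forall d, S d -> exists2 d', S' d' & (d' <= d)%N) ->
  is_omin S v <-> is_omin S' v.
Proof.
move=> S'S SS'; case: v => [d|] /=; split.
- move=> [Sd minS]; have [d' S'd' le_d'd] := SS' d Sd.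
  suff dd' : d = d' by rewrite dd' in minS *; split=> // d'' /S'S /minS.
  by apply/eqP; rewrite eqn_leq le_d'd minS //; exact: S'S.
- move=> [S'd minS']; split=> [|d' /SS' [d'' /minS' le1 le2]]; first exact: S'S.
  exact: leq_trans le2.
- by move=> noS d /S'S /noS.
- by move=> noS' d /SS' [d' /noS'].
Qed.

Lemma is_omin_join (S1 S2 S : nat -> Prop) (a1 a2 : nat) v1 v2 :
  (forall d, S1 d -> S (d + a1)%N) -> (forall d, S2 d -> S (d + a2)%N) ->
  (forall d, S d -> (exists2 d1, S1 d1 & (d1 + a1 <= d)%N) \/
                    (exists2 d2, S2 d2 & (d2 + a2 <= d)%N)) ->
  is_omin S1 v1 -> is_omin S2 v2 -> is_omin S (ominn (oaddn v1 a1) (oaddn v2 a2)).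
Proof.
move=> up1 up2 down.
case: v1 => [d1 [S1d1 min1]|no1]; case: v2 => [d2 [S2d2 min2]|no2] /=.
- split=> [|d /down [[d' /min1 le1 le]|[d' /min2 le2 le]]]; [|lia..].
  by rewrite /minn; case: ifP => _; [apply: up1 | apply: up2].
- split=> [|d /down [[d' /min1 le1 le]|[d' /no2 //]]]; [exact: up1 | lia].
- split=> [|d /down [[d' /no1 //]|[d' /min2 le2 le]]]; [exact: up2 | lia].
- by move=> d /down [[d' /no1]|[d' /no2]].
Qed.

Lemma is_vnumE (K : fieldType) (n : nat) (I : {mpoly K[n]} -> Prop) v :
  is_vnum I v = is_omin (vnum_witness I) v.
Proof. by []. Qed.

Lemma prime_pred_prod (R : pzSemiRingType) (Q : R -> Prop) (J : Type) (r : seq J)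
    (B : pred J) (F : J -> R) :
  ~ Q 1 -> (forall a b, Q (a * b) -> Q a \/ Q b) ->
  Q (\prod_(i <- r | B i) F i) -> exists2 i, B i & Q (F i).
Proof.
move=> Q1 QM; elim: r => [|i r IHr]; first by rewrite big_nil.
rewrite big_cons; case: ifP => [Bi /QM [Qi|/IHr //]|_ /IHr //].
by exists i.
Qed.

Lemma colon_ideal_is_ideal (R : nzRingType) (I : R -> Prop) f :
  is_ideal I -> is_ideal (colon_ideal I f).
Proof.
move=> [I0 [ID IM]]; rewrite /colon_ideal; split; first by rewrite mul0r.
by split=> [a b Ia Ib|r a Ia]; [rewrite mulrDl; apply: ID | rewrite -mulrA; apply: IM].
Qed.

Definition leaves_edge (T : finType) (e : rel T) (A : {set T}) (x y : T) : Prop :=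
  [/\ e x y, x \notin A, y \notin A &
      forall x' y', e x' y' -> x' \notin A -> y' \notin A ->
        (x' = x /\ y' = y) \/ (x' = y /\ y' = x)].

Definition leaves_one_edge (T : finType) (e : rel T) (A : {set T}) : Prop :=
  exists x y, leaves_edge e A x y.

Definition one_edge_sizes (T : finType) (e : rel T) (d : nat) : Prop :=
  exists2 A, leaves_one_edge e A & #|A| = d.

Section CoverIdeal.
Variables (K : fieldType) (T : finType) (e : rel T).
Local Notation n := #|T|.
Local Notation P := {mpoly K[#|T|]}.
Local Notation I := (cover_ideal K e).

Definition vsupp (m : 'X_{1..n}) : {set T} := [set v | (0 < m (enum_rank v))%N].

Definition sqfree_mnm (C : {set T}) : 'X_{1..n} := (\sum_(v in C) U_(enum_rank v))%MM.

Lemma vsuppD m1 m2 : vsupp (m1 + m2)%MM = vsupp m1 :|: vsupp m2.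
Proof. by apply/setP => v; rewrite !inE mnmDE addn_gt0. Qed.

Lemma vsupp_U v : vsupp U_(enum_rank v) = [set v].
Proof. by apply/setP => w; rewrite !inE mnm1E (inj_eq enum_rank_inj) eq_sym lt0b. Qed.

Lemma mem_vsupp_sumU (J : finType) (B : pred J) (F : J -> T) j : B j ->
  F j \in vsupp (\sum_(i | B i) U_(enum_rank (F i)))%MM.
Proof. by move=> Bj; rewrite inE mnm_sumE (bigD1 j) //= mnm1E eqxx addn_gt0. Qed.

Lemma sqfree_mnmE C v : sqfree_mnm C (enum_rank v) = (v \in C).
Proof.
rewrite mnm_sumE; case: (boolP (v \in C)) => vC.
  rewrite (bigD1 v) //= mnm1E eqxx big1 // => w /andP [_ wv].
  by rewrite mnm1E (inj_eq enum_rank_inj) (negbTE wv).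
rewrite big1 // => w wC; rewrite mnm1E (inj_eq enum_rank_inj).
by apply/eqP; rewrite eqb0; apply: contra vC => /eqP <-.
Qed.

Lemma vsupp_sqfree_mnm C : vsupp (sqfree_mnm C) = C.
Proof. by apply/setP => v; rewrite inE sqfree_mnmE lt0b. Qed.

Lemma mdeg_sqfree_mnm C : mdeg (sqfree_mnm C) = #|C|.
Proof. by rewrite mdeg_sum (eq_bigr (fun _ => 1%N)) ?sum1_card // => v _; exact: mdeg1. Qed.

Lemma card_vsupp_le_mdeg m : (#|vsupp m| <= mdeg m)%N.
Proof.
rewrite mdegE -sum1_card (reindex (@enum_rank T)) /=; last first.
  by apply: onW_bij; exact: enum_rank_bij.
by rewrite big_mkcond /= leq_sum // => v _; rewrite inE; case: (m (enum_rank v)).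
Qed.

Lemma cover_monomialE C : cover_monomial K C = 'X_[sqfree_mnm C] :> P.
Proof.
by rewrite /cover_monomial /tvar (big_morph (fun m => 'X_[m] : P) (@mpolyXD _ _) (@mpolyX0 _ _)).
Qed.

Lemma vertex_coverP (A : {set T}) :
  reflect (forall x y, e x y -> (x \in A) || (y \in A)) (vertex_cover e A).
Proof.
apply: (iffP forallP) => [cA x y exy|cA x]; first exact: implyP (forallP (cA x) y) exy.
by apply/forallP => y; apply/implyP; exact: cA.
Qed.

Lemma vertex_coverS (A B : {set T}) :
  A \subset B -> vertex_cover e A -> vertex_cover e B.
Proof.
move=> AB /vertex_coverP cA; apply/vertex_coverP => x y /cA.
by case/orP => /(subsetP AB) ->; rewrite ?orbT.
Qed.

Lemma cover_ideal_is_ideal : is_ideal I.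
Proof.
split; first by exists (fun _ => 0); rewrite big1 // => C _; rewrite mul0r.
split=> [a b [ca ->] [cb ->]|r a [ca ->]].
  by exists (fun C => ca C + cb C); rewrite -big_split; apply: eq_bigr => C _; rewrite mulrDl.
by exists (fun C => r * ca C); rewrite mulr_sumr; apply: eq_bigr => C _; rewrite mulrA.
Qed.

Lemma cover_ideal_monomial C : min_vertex_cover e C -> I (cover_monomial K C).
Proof.
move=> minC; exists (fun C' => (C' == C)%:R).
rewrite (bigD1 C) //= eqxx mul1r big1 ?addr0 // => C' /andP [_ /negbTE ->].
by rewrite mul0r.
Qed.

Lemma cover_idealP f : I f <-> all (fun m => vertex_cover e (vsupp m)) (msupp f).
Proof.
have [I0 [ID IM]] := cover_ideal_is_ideal; split.
  move=> [c ->]; apply: (big_ind (fun g : P => all _ (msupp g))) => [|g h /allP cg /allP ch|C minC].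
  - by rewrite msupp0.
  - by apply/allP => m /msuppD_le; rewrite mem_cat => /orP [/cg|/ch].
  - apply/allP => m; rewrite cover_monomialE (perm_mem (msuppMX _ _)).
    case/mapP => m' _ ->; rewrite vsuppD vsupp_sqfree_mnm.
    exact: vertex_coverS (subsetUl _ _) (minsetp minC).
move=> /allP cf; rewrite (mpolyE f) big_seq; apply: big_ind => // m mf.
have [C minC CS] := minset_exists (cf m mf).
have le_Cm : (sqfree_mnm C <= m)%MM.
  apply/mnm_lepP => i; rewrite -(enum_valK i) sqfree_mnmE.
  by case: (boolP (_ \in C)) => // /(subsetP CS); rewrite inE.
have -> : 'X_[m] = 'X_[(m - sqfree_mnm C)%MM] * 'X_[sqfree_mnm C] :> P.
  by rewrite -mpolyXD submK.
rewrite -mul_mpolyC mulrA -cover_monomialE.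
exact/IM/cover_ideal_monomial.
Qed.

Lemma cover_ideal_mulX g mu : I (g * 'X_[mu]) <->
  all (fun m => vertex_cover e (vsupp mu :|: vsupp m)) (msupp g).
Proof.
rewrite cover_idealP; split => /allP cg; apply/allP.
  move=> m mg; rewrite -vsuppD; apply: cg.
  by rewrite (perm_mem (msuppMX _ _)) map_f.
move=> m; rewrite (perm_mem (msuppMX _ _)) => /mapP [m' m'g ->].
by rewrite vsuppD; exact: cg.
Qed.

Section PrimeColon.
Variable f : P.
Hypothesis colon_proper : ~ colon_ideal I f 1.
Hypothesis colon_prime :
  forall a b, colon_ideal I f (a * b) -> colon_ideal I f a \/ colon_ideal I f b.

Definition uncovered (x y : T) : bool :=
  e x y && has (fun m => (x \notin vsupp m) && (y \notin vsupp m)) (msupp f).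

Lemma colon_var_uncovered z x y :
  colon_ideal I f 'X_(enum_rank z) -> uncovered x y -> z \in [set x; y].
Proof.
rewrite /colon_ideal mulrC => /cover_ideal_mulX /allP cov.
case/andP => exy /hasP [m mf /andP [xm ym]].
move/vertex_coverP: (cov m mf) => /(_ x y exy).
by rewrite vsupp_U !in_setU (negbTE xm) (negbTE ym) !orbF !in_set1 ![z == _]eq_sym.
Qed.

Lemma colon_var_choice (w : T -> T -> T) : (forall x y, w x y \in [set x; y]) ->
  exists x y, uncovered x y /\ colon_ideal I f 'X_(enum_rank (w x y)).
Proof.
move=> w_end.
pose mu := (\sum_(xy : T * T | uncovered xy.1 xy.2) U_(enum_rank (w xy.1 xy.2)))%MM.
have colon_mu : colon_ideal I f 'X_[mu].
  rewrite /colon_ideal mulrC; apply/cover_ideal_mulX/allP => m mf.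
  apply/vertex_coverP => x y exy; rewrite !in_setU.
  case: (boolP (uncovered x y)) => [unc|].
    have := @mem_vsupp_sumU _ (fun xy => uncovered xy.1 xy.2) (fun xy => w xy.1 xy.2) (x, y) unc.
    by rewrite -/mu; case/set2P: (w_end x y) => -> ->; rewrite ?orbT.
  rewrite /uncovered exy /= => /hasPn /(_ m mf).
  by rewrite negb_and !negbK => /orP [] ->; rewrite ?orbT.
move: colon_mu; rewrite (big_morph (fun m => 'X_[m] : P) (@mpolyXD _ _) (@mpolyX0 _ _)).
by case/(prime_pred_prod colon_proper colon_prime) => -[x y] /= unc Q; exists x, y.
Qed.

(* Choosing from each uncovered edge an endpoint outside the common vertices of
   all uncovered edges whenever possible forces both endpoints to be common. *)
Lemma uncovered_edge_common : exists x y, uncovered x y /\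
  forall x' y', uncovered x' y' -> (x \in [set x'; y']) && (y \in [set x'; y']).
Proof.
pose common := [set z | [forall x', forall y', uncovered x' y' ==> (z \in [set x'; y'])]].
have commonP z : colon_ideal I f 'X_(enum_rank z) -> z \in common.
  move=> Qz; rewrite inE; apply/forallP => x'; apply/forallP => y'; apply/implyP.
  exact: colon_var_uncovered.
have commonE z x' y' : z \in common -> uncovered x' y' -> z \in [set x'; y'].
  by rewrite inE => /forallP /(_ x') /forallP /(_ y') /implyP.
have w_end x y : (if x \in common then y else x) \in [set x; y].
  by case: ifP; rewrite !inE eqxx ?orbT.
have [x [y [unc /commonP]]] := colon_var_choice w_end.
case: ifP => [xc yc|/negbT xnc xc]; last by rewrite xc in xnc.
by exists x, y; split => // x' y' unc'; rewrite !(commonE _ x' y').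
Qed.

End PrimeColon.

Lemma vnum_witness_one_edge d : irreflexive e -> vnum_witness I d ->
  exists2 A, leaves_one_edge e A & (#|A| <= d)%N.
Proof.
move=> irr [f [homf [p [[[_ [p1 pM]] _] fp]]]].
have colon_proper : ~ colon_ideal I f 1 by move/fp.
have colon_prime a b : colon_ideal I f (a * b) -> colon_ideal I f a \/ colon_ideal I f b.
  by move/fp/pM => [] /fp; [left|right].
have [x [y [unc common]]] := uncovered_edge_common colon_proper colon_prime.
have /andP [exy /hasP [m mf /andP [xm ym]]] := unc.
exists (vsupp m); last by move/allP/(_ m mf)/eqP: homf => <-; exact: card_vsupp_le_mdeg.
exists x, y; split => // x' y' exy' x'm y'm.
have xy : x != y by apply: contraTneq exy => ->; rewrite irr.
have unc' : uncovered f x' y' by rewrite /uncovered exy'; apply/hasP; exists m; rewrite ?x'm.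
move: (common x' y' unc') xy; rewrite !inE.
by case/andP => /orP [] /eqP -> /orP [] /eqP ->; rewrite ?eqxx //; auto.
Qed.

Section Substitution.
Variables x y : T.

Definition subst0_var (i : 'I_n) : P := if enum_val i \in [set x; y] then 0 else 'X_i.

Definition subst0 (p : P) : P := mmap (@mpolyC n K) subst0_var p.

Lemma subst0M a b : subst0 (a * b) = subst0 a * subst0 b.
Proof. exact: rmorphM. Qed.

Lemma subst0_mmap1 m : mmap1 subst0_var m =
  if (x \notin vsupp m) && (y \notin vsupp m) then 'X_[m] else 0 :> P.
Proof.
rewrite /mmap1; case: ifP => [/andP [xm ym]|].
  rewrite mpolyXE_id; apply: eq_bigr => i _; rewrite /subst0_var; case: ifP => // /set2P [] ei.
    by move: xm; rewrite inE -ei enum_valK lt0n negbK => /eqP ->; rewrite !expr0.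
  by move: ym; rewrite inE -ei enum_valK lt0n negbK => /eqP ->; rewrite !expr0.
move/negbT; rewrite negb_and !negbK => /orP [] zm.
  rewrite (bigD1 (enum_rank x)) //= /subst0_var enum_rankK !inE eqxx /= expr0n.
  by move: zm; rewrite inE => /lt0n_neq0 /negbTE ->; rewrite mul0r.
rewrite (bigD1 (enum_rank y)) //= /subst0_var enum_rankK !inE eqxx orbT /= expr0n.
by move: zm; rewrite inE => /lt0n_neq0 /negbTE ->; rewrite mul0r.
Qed.

Lemma subst0E p : subst0 p =
  \sum_(m <- msupp p | (x \notin vsupp m) && (y \notin vsupp m)) p@_m *: 'X_[m].
Proof.
rewrite /subst0 /mmap; elim: (msupp p) => [|m r IHr]; first by rewrite !big_nil.
rewrite !big_cons IHr subst0_mmap1; case: ifP => _; by rewrite ?mulr0 ?add0r // mul_mpolyC.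
Qed.

Lemma subst0_eq0 p :
  subst0 p = 0 <-> all (fun m => (x \in vsupp m) || (y \in vsupp m)) (msupp p).
Proof.
rewrite subst0E -big_filter; set r := [seq _ <- _ | _]; split.
  have msupp_r : perm_eq (msupp (\sum_(m <- r) p@_m *: 'X_[m] : P)) r.
    apply: msupp_sumX; first by rewrite filter_uniq // msupp_uniq.
    by move=> m; rewrite mem_filter => /andP [_]; rewrite mcoeff_msupp.
  move=> p0; move: msupp_r; rewrite p0 msupp0 perm_sym => /perm_nilP r0.
  apply/allP => m mp; apply/negPn/negP => mxy.
  have : m \in r by rewrite mem_filter mp -negb_or mxy.
  by rewrite r0.
move=> /allP pxy; rewrite big1_seq // => m /andP [_].
rewrite mem_filter => /andP [/andP [xm ym] mp].
by move: (pxy m mp); rewrite (negbTE xm) (negbTE ym).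
Qed.

End Substitution.

Lemma colon_cover_monomial A x y : leaves_edge e A x y ->
  forall g, colon_ideal I (cover_monomial K A) g <-> subst0 x y g = 0.
Proof.
move=> [exy xA yA uniq] g; rewrite /colon_ideal cover_monomialE cover_ideal_mulX.
rewrite vsupp_sqfree_mnm subst0_eq0; split => /allP cg; apply/allP => m mg.
  by move/vertex_coverP: (cg m mg) => /(_ x y exy); rewrite !in_setU (negbTE xA) (negbTE yA).
apply/vertex_coverP => x' y' exy'; rewrite !in_setU.
case: (boolP (x' \in A)) => //= x'A; case: (boolP (y' \in A)) => [|y'A]; first by rewrite orbT.
by case: (uniq x' y' exy' x'A y'A) => -[-> ->]; rewrite ?(orbC (y \in _)) cg.
Qed.

Lemma one_edge_vnum_witness A : leaves_one_edge e A -> vnum_witness I #|A|.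
Proof.
move=> [x [y lxy]]; have colonE := colon_cover_monomial lxy.
exists (cover_monomial K A); split.
  by rewrite /homog_of_deg cover_monomialE qualifE /= msuppX /= mdeg_sqfree_mnm eqxx.
exists (colon_ideal I (cover_monomial K A)); split => //.
split; last by exists (cover_monomial K A).
split; first exact/colon_ideal_is_ideal/cover_ideal_is_ideal.
split; first by move/colonE/subst0_eq0; rewrite msupp1 /= andbT !inE !mnm0E.
move=> a b /colonE; rewrite subst0M => /eqP; rewrite mulf_eq0.
by case/orP => /eqP /colonE; [left|right].
Qed.

Lemma is_vnum_cover_ideal v : irreflexive e -> is_vnum I v <-> is_omin (one_edge_sizes e) v.
Proof.
move=> irr; rewrite is_vnumE; apply: is_omin_transfer => [d [A lA <-]|d].
  exact: one_edge_vnum_witness.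
by case/(vnum_witness_one_edge irr) => A lA le; exists #|A|; first exists A.
Qed.

End CoverIdeal.

Lemma leaves_edge_setC2 (T : finType) (e : rel T) x y :
  irreflexive e -> e x y -> leaves_edge e (~: [set x; y]) x y.
Proof.
move=> irr exy; split; rewrite ?inE ?eqxx ?orbT // => x' y' exy'.
by rewrite !inE !negbK => /orP [] /eqP ex /orP [] /eqP ey; subst; auto; rewrite irr in exy'.
Qed.

Lemma card_setC2 (T : finType) (e : rel T) x y :
  irreflexive e -> e x y -> (#|~: [set x; y]| + 2 = #|T|)%N.
Proof.
move=> irr exy; have xy : x != y by apply: contraTneq exy => ->; rewrite irr.
by rewrite -(cardsC [set x; y]) cards2 xy addnC.
Qed.

Section Join.
Variables (T1 T2 : finType) (e1 : rel T1) (e2 : rel T2).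
Local Notation G := (graph_join e1 e2).

Lemma cards_sum (A : {set T1 + T2}) : #|A| = (#|inl @^-1: A| + #|inr @^-1: A|)%N.
Proof.
rewrite -sum1_card big_sumType -!sum1_card.
by congr addn; apply: eq_bigl => z; rewrite inE.
Qed.

Lemma one_edge_sizes_join_l d : one_edge_sizes e1 d -> one_edge_sizes G (d + #|T2|).
Proof.
move=> [A1 [x [y [exy xA yA uniq]]] <-].
exists [set z | if z is inl u then u \in A1 else true]; last first.
  rewrite cards_sum -cardsT; congr addn; apply: eq_card => z; by rewrite !inE.
exists (inl x), (inl y); split; rewrite ?inE //.
move=> [x'|x'] [y'|y'] //=; rewrite !inE // => exy' x'A y'A.
by case: (uniq x' y' exy' x'A y'A) => -[-> ->]; auto.
Qed.

Lemma one_edge_sizes_join_r d : one_edge_sizes e2 d -> one_edge_sizes G (d + #|T1|).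
Proof.
move=> [A2 [x [y [exy xA yA uniq]]] <-].
exists [set z | if z is inr u then u \in A2 else true]; last first.
  rewrite cards_sum addnC -cardsT; congr addn; apply: eq_card => z; by rewrite !inE.
exists (inr x), (inr y); split; rewrite ?inE //.
move=> [x'|x'] [y'|y'] //=; rewrite !inE // => exy' x'A y'A.
by case: (uniq x' y' exy' x'A y'A) => -[-> ->]; auto.
Qed.

Lemma leaves_one_edge_restrict_l (A : {set T1 + T2}) :
  (forall z, inr z \in A) -> leaves_one_edge G A -> leaves_one_edge e1 (inl @^-1: A).
Proof.
move=> allA [[x|x] [[y|y] [/= exy xA yA uniq]]]; rewrite ?allA // in xA yA.
exists x, y; split; rewrite ?inE // => x' y' exy'; rewrite !inE => x'A y'A.
by case: (uniq (inl x') (inl y') exy' x'A y'A) => -[[->] [->]]; auto.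
Qed.

Lemma leaves_one_edge_restrict_r (A : {set T1 + T2}) :
  (forall z, inl z \in A) -> leaves_one_edge G A -> leaves_one_edge e2 (inr @^-1: A).
Proof.
move=> allA [[x|x] [[y|y] [/= exy xA yA uniq]]]; rewrite ?allA // in xA yA.
exists x, y; split; rewrite ?inE // => x' y' exy'; rewrite !inE => x'A y'A.
by case: (uniq (inr x') (inr y') exy' x'A y'A) => -[[->] [->]]; auto.
Qed.

Lemma leaves_one_edge_cross (A : {set T1 + T2}) x1 y2 : leaves_one_edge G A ->
  inl x1 \notin A -> inr y2 \notin A -> A = ~: [set inl x1; inr y2].
Proof.
move=> [a [b [_ _ _ uniq]]] x1A y2A; apply/setP => z; rewrite !inE.
apply/idP/idP => [zA|]; first by apply/norP; split; apply: contraTneq zA => ->.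
apply: contraR => zA; have h := uniq (inl x1) (inr y2) isT x1A y2A.
case: z zA => u uA.
  suff -> : inl u = inl x1 :> T1 + T2 by rewrite eqxx.
  by case: h (uniq (inl u) (inr y2) isT uA y2A) => [[? ?]|[? ?]] [[? ?]|[? ?]]; congruence.
suff -> : inr u = inr y2 :> T1 + T2 by rewrite eqxx orbT.
by case: h (uniq (inl x1) (inr u) isT x1A uA) => [[? ?]|[? ?]] [[? ?]|[? ?]]; congruence.
Qed.

Lemma join_edgeless_complete_multipartite (x1 : T1) (y2 : T2) :
  discrete_graph e1 -> discrete_graph e2 -> complete_multipartite G.
Proof.
move=> no1 no2; exists 2, (fun z => if z is inl _ then ord0 else ord_max); split => //.
split; first by case=> -[|[|//]] lt; [exists (inl x1) | exists (inr y2)]; apply: val_inj.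
by move=> [x|x] [y|y] /=; rewrite ?no1 ?no2.
Qed.

Lemma one_edge_sizes_join d :
  irreflexive e1 -> irreflexive e2 -> ~ complete_multipartite G ->
  one_edge_sizes G d ->
  (exists2 d1, one_edge_sizes e1 d1 & (d1 + #|T2| <= d)%N) \/
  (exists2 d2, one_edge_sizes e2 d2 & (d2 + #|T1| <= d)%N).
Proof.
move=> irr1 irr2 notcm [A lA <-]; rewrite cards_sum.
have [/forallP allA2|/forallPn [y2 y2A]] := boolP [forall z, inr z \in A].
  left; exists #|inl @^-1: A|.
    by exists (inl @^-1: A); first exact: leaves_one_edge_restrict_l.
  by rewrite leq_add2l -cardsT subset_leq_card //; apply/subsetP => z _; rewrite inE.
have [/forallP allA1|/forallPn [x1 x1A]] := boolP [forall z, inl z \in A].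
  right; exists #|inr @^-1: A|.
    by exists (inr @^-1: A); first exact: leaves_one_edge_restrict_r.
  by rewrite addnC leq_add2r -cardsT subset_leq_card //; apply/subsetP => z _; rewrite inE.
have cardA : (#|inl @^-1: A| + #|inr @^-1: A| + 2 = #|T1| + #|T2|)%N.
  rewrite -cards_sum (leaves_one_edge_cross lA x1A y2A) -card_sum.
  by rewrite -(cardsC [set inl x1; inr y2]) cards2 addnC.
have [[x y] /= exy|no1] := pickP (fun xy : T1 * T1 => e1 xy.1 xy.2).
  left; exists #|~: [set x; y]|.
    by exists (~: [set x; y]) => //; exists x, y; exact: leaves_edge_setC2 irr1 exy.
  by rewrite -(leq_add2r 2) cardA -(card_setC2 irr1 exy) addnAC.
have [[x y] /= exy|no2] := pickP (fun xy : T2 * T2 => e2 xy.1 xy.2).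
  right; exists #|~: [set x; y]|.
    by exists (~: [set x; y]) => //; exists x, y; exact: leaves_edge_setC2 irr2 exy.
  by rewrite -(leq_add2r 2) cardA -(card_setC2 irr2 exy) addnAC addnC.
case: notcm; apply: (join_edgeless_complete_multipartite x1 y2) => u v.
  exact: no1 (u, v).
exact: no2 (u, v).
Qed.

End Join.

Theorem proposition3p12 (K : fieldType) (T1 T2 : finType)
    (e1 : rel T1) (e2 : rel T2) :
  simple_graph e1 -> simple_graph e2 ->
  ~ complete_multipartite (graph_join e1 e2) ->
  (forall v1 v2 : option nat,
     is_vnum (cover_ideal K e1) v1 ->
     is_vnum (cover_ideal K e2) v2 ->
     is_vnum (cover_ideal K (graph_join e1 e2))
       (ominn (oaddn v1 #|T2|) (oaddn v2 #|T1|)))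
  /\
  (discrete_graph e2 ->
   forall v1 : option nat,
     is_vnum (cover_ideal K e1) v1 ->
     is_vnum (cover_ideal K (graph_join e1 e2)) (oaddn v1 #|T2|)).
Proof.
move=> [_ irr1] [_ irr2] notcm.
have irrG : irreflexive (graph_join e1 e2) by case=> /=.
have vnum_join v1 v2 : is_vnum (cover_ideal K e1) v1 -> is_vnum (cover_ideal K e2) v2 ->
    is_vnum (cover_ideal K (graph_join e1 e2)) (ominn (oaddn v1 #|T2|) (oaddn v2 #|T1|)).
  move=> /(is_vnum_cover_ideal K v1 irr1) vnum1 /(is_vnum_cover_ideal K v2 irr2) vnum2.
  apply/is_vnum_cover_ideal => //; apply: is_omin_join vnum1 vnum2.
  - exact: one_edge_sizes_join_l.
  - exact: one_edge_sizes_join_r.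
  - by move=> d; apply: one_edge_sizes_join.
split=> // edgeless2 v1 vnum1.
have vnum2 : is_vnum (cover_ideal K e2) None.
  by apply/is_vnum_cover_ideal => // d [A [x [y [exy _]]]]; rewrite edgeless2 in exy.
by have := vnum_join v1 None vnum1 vnum2; case: v1 {vnum1}.
Qed.
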